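(* Let $r\ge1$ and let $(a_n)_{n\ge1}$ be any sequence of non-negative real numbers with $\lim_{n\to\infty}a_n=0$. Then there exists $\mu\in\mathcal P_r$ such that $d_r(\delta^{\bullet,n}_\bullet,\mu)\ge a_n$ for every $n\in\mathbb N$.
   Context: $\mathcal P$ denotes the set of Borel probability measures on $\mathbb R$; $\mathcal P_r=\{\mu\in\mathcal P:\int|x|^r{\rm d}\mu(x)<\infty\}$. For $\mu\in\mathcal P$, $F_\mu(x)=\mu(]-\infty,x])$ and $F_\mu^{-1}(t)=\sup\{x: F_\mu(x)\le t\}$, $t\in]0,1[$. $d_r(\mu,\nu)=\big(\int_0^1|F_\mu^{-1}(t)-F_\nu^{-1}(t)|^r{\rm d}t\big)^{1/r}$ on $\mathcal P_r$. With $\Xi_n=\{\mathbf x\in\mathbb R^n:x_1\le\dots\le x_n\}$, $\Pi_n=\{\mathbf p\in\mathbb R^n:p_i\ge0,\sum_ip_i=1\}$ and $\delta^{\mathbf p}_{\mathbf x}=\sum_ip_i\delta_{x_i}$, set $d_r(\delta^{\bullet,n}_\bullet,\mu)=\min_{\mathbf x\in\Xi_n,\mathbf p\in\Pi_n}d_r(\delta^{\mathbf p}_{\mathbf x},\mu)$, the error of a best (unconstrained) $n$-point $r$-approximation (the minimum is attained). *)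

From Stdlib Require Import Reals Lra ClassicalEpsilon.
Open Scope R_scope.

(* Supremum of a set of reals (classical choice; arbitrary if no lub exists). *)
Definition Rsup (E : R -> Prop) : R :=
  epsilon (inhabits 0) (fun s => is_lub E s).

Definition rpow (x s : R) : R := if Rle_dec x 0 then 0 else Rpower x s.

Fixpoint sumR (n : nat) (f : nat -> R) : R :=
  match n with
  | O => 0
  | S m => sumR m f + f m
  end.

(* A Borel probability measure on R is represented by its distribution
   function F_mu (bijective correspondence). *)
Definition is_cdf (F : R -> R) : Prop :=
  (forall x y, x <= y -> F x <= F y) /\
  (forall x eps, 0 < eps -> exists d, 0 < d /\
      forall y, x <= y -> y < x + d -> F y - F x < eps) /\
  (forall eps, 0 < eps -> exists M, forall x, x <= M -> F x < eps) /\
  (forall eps, 0 < eps -> exists M, forall x, M <= x -> 1 - F x < eps).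

Definition quantile (F : R -> R) (t : R) : R := Rsup (fun x => F x <= t).

(* Integral over ]0,1[ of a nonnegative function, as the supremum of its
   Riemann integrals over compact subintervals [a,b] of ]0,1[. *)
Definition int01_set (f : R -> R) (J : R) : Prop :=
  exists a b (pr : Riemann_integrable f a b),
    0 < a /\ a <= b /\ b < 1 /\ RiemannInt pr = J.

Definition int01 (f : R -> R) : R := Rsup (int01_set f).

Definition int01_finite (f : R -> R) : Prop :=
  exists M, forall J, int01_set f J -> J <= M.

(* mu in P_r : int |x|^r dmu < oo, i.e. int_0^1 |F^{-1}(t)|^r dt < oo. *)
Definition in_Pr (r : R) (F : R -> R) : Prop :=
  is_cdf F /\ int01_finite (fun t => rpow (Rabs (quantile F t)) r).

Definition d_r (r : R) (F G : R -> R) : R :=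
  rpow (int01 (fun t => rpow (Rabs (quantile F t - quantile G t)) r)) (/ r).

(* Xi_n and Pi_n; vectors in R^n are functions nat -> R read on i < n. *)
Definition in_Xi (n : nat) (x : nat -> R) : Prop :=
  forall i j, (i <= j)%nat -> (j < n)%nat -> x i <= x j.

Definition in_Pi (n : nat) (p : nat -> R) : Prop :=
  (forall i, (i < n)%nat -> 0 <= p i) /\ sumR n p = 1.

(* Distribution function of delta_x^p = sum_i p_i delta_{x_i}. *)
Definition disc_cdf (n : nat) (x p : nat -> R) (t : R) : R :=
  sumR n (fun i => if Rle_dec (x i) t then p i else 0).

From Stdlib Require Import Reals.
From Stdlib Require Import Lra Lia ZArith List.
From Stdlib Require Import Classical ClassicalEpsilon FunctionalExtensionality PropExtensionality.
From Coquelicot Require RInt Hierarchy.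
Open Scope R_scope.

(* Put atoms at [atom k = 3 D_k], [D_k = B 3^k], so that the windows [(2 D_k, 4 D_k)] are
   disjoint, and group the indices [k] into consecutive blocks, block [j] having [2 N_(j+1)]
   atoms of mass [w_j (B / D_k)^r] with [w_j = 4^-(j+1) / N_(j+1)]; the remaining mass sits
   at [0].  The total mass of the atoms is at most [2/3] and their [r]-th moment is finite.
   A measure with [n < N_(j+1)] atoms leaves at least [N_(j+1)] windows of block [j] empty;
   on the quantile interval of an atom with empty window the two quantile functions differ by
   at least [D_k], which contributes [w_j B^r] to [d_r^r].  Hence [d_r >= B 4^-(j+1)], and
   it remains to choose [N] so that [a_n <= B 4^-(j+1)] for [n >= N_j]. *)

Lemma sumR_ext n f g : (forall i, (i < n)%nat -> f i = g i) -> sumR n f = sumR n g.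
Proof. induction n; intros H; simpl; auto. rewrite IHn, H; auto; intros; apply H; lia. Qed.

Lemma sumR_le n f g : (forall i, (i < n)%nat -> f i <= g i) -> sumR n f <= sumR n g.
Proof.
  induction n; intros H; simpl; [lra|].
  assert (f n <= g n) by (apply H; lia).
  assert (sumR n f <= sumR n g) by (apply IHn; intros; apply H; lia). lra.
Qed.

Lemma sumR_const n c : sumR n (fun _ => c) = INR n * c.
Proof. induction n; simpl sumR; [simpl; lra|]. rewrite IHn, S_INR; lra. Qed.

Lemma sumR_ge0 n f : (forall i, (i < n)%nat -> 0 <= f i) -> 0 <= sumR n f.
Proof.
  intros H. apply Rle_trans with (sumR n (fun _ => 0)).
  - rewrite sumR_const; lra.
  - apply sumR_le; auto.
Qed.

Lemma sumR_plus n f g : sumR n (fun i => f i + g i) = sumR n f + sumR n g.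
Proof. induction n; simpl; [lra|]. rewrite IHn; lra. Qed.

Lemma sumR_minus n f g : sumR n (fun i => f i - g i) = sumR n f - sumR n g.
Proof. induction n; simpl; [lra|]. rewrite IHn; lra. Qed.

Lemma sumR_scal n c f : sumR n (fun i => c * f i) = c * sumR n f.
Proof. induction n; simpl; [lra|]. rewrite IHn; lra. Qed.

Lemma sumR_split m l f : sumR (m + l) f = sumR m f + sumR l (fun i => f (m + i)%nat).
Proof.
  induction l; simpl; [rewrite Nat.add_0_r; lra|].
  rewrite Nat.add_succ_r; simpl. rewrite IHl. lra.
Qed.

Lemma sumR_shift K f : sumR (S K) f = f 0%nat + sumR K (fun k => f (S k)).
Proof. induction K; simpl; [lra|]. simpl in IHK. rewrite IHK. lra. Qed.

Lemma sumR_swap n m (f : nat -> nat -> R) :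
  sumR n (fun i => sumR m (fun j => f i j)) = sumR m (fun j => sumR n (fun i => f i j)).
Proof. induction n; simpl; [induction m; simpl; lra|]. rewrite IHn, <- sumR_plus. reflexivity. Qed.

Lemma sumR_telescope (f : nat -> R) K : sumR K (fun k => f (S k) - f k) = f K - f 0%nat.
Proof. induction K; simpl; [lra|]. rewrite IHK. lra. Qed.

Lemma sumR_term_le n f i :
  (i < n)%nat -> (forall j, (j < n)%nat -> 0 <= f j) -> f i <= sumR n f.
Proof.
  induction n; intros Hi H; [lia|]. simpl.
  assert (0 <= f n) by (apply H; lia).
  destruct (Nat.eq_dec i n) as [->|Hne].
  - assert (0 <= sumR n f) by (apply sumR_ge0; intros; apply H; lia). lra.
  - assert (f i <= sumR n f) by (apply IHn; [lia | intros; apply H; lia]). lra.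
Qed.

Lemma sumR_le_length n m f : (n <= m)%nat -> (forall j, 0 <= f j) -> sumR n f <= sumR m f.
Proof.
  intros H Hf. replace m with (n + (m - n))%nat by lia. rewrite sumR_split.
  assert (0 <= sumR (m - n) (fun i => f (n + i)%nat)) by (apply sumR_ge0; auto). lra.
Qed.

Lemma Rsup_is_lub E : bound E -> (exists x, E x) -> is_lub E (Rsup E).
Proof.
  intros Hb Hn. unfold Rsup. apply epsilon_spec.
  destruct (completeness E Hb Hn) as [m Hm]. eauto.
Qed.

Lemma Rsup_ext E1 E2 : (forall x, E1 x <-> E2 x) -> Rsup E1 = Rsup E2.
Proof.
  intros H. f_equal. apply functional_extensionality. intros x.
  apply propositional_extensionality. auto.
Qed.

Lemma rpow_ge0 x s : 0 <= rpow x s.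
Proof. unfold rpow. destruct (Rle_dec x 0); [lra|]. left; apply exp_pos. Qed.

Lemma rpow_Rpower x s : 0 < x -> rpow x s = Rpower x s.
Proof. intros. unfold rpow. destruct (Rle_dec x 0); [lra|auto]. Qed.

Lemma rpow_gt0 x s : 0 < x -> 0 < rpow x s.
Proof. intros. rewrite rpow_Rpower; auto. apply exp_pos. Qed.

Lemma rpow_le x y s : 0 <= s -> 0 <= x <= y -> rpow x s <= rpow y s.
Proof.
  intros Hs [H1 H2]. unfold rpow at 1. destruct (Rle_dec x 0); [apply rpow_ge0|].
  rewrite rpow_Rpower by lra. apply Rle_Rpower_l; lra.
Qed.

Lemma rpow_mult x y s : 0 < x -> 0 < y -> rpow (x * y) s = rpow x s * rpow y s.
Proof. intros. rewrite !rpow_Rpower by nra. symmetry; apply Rpower_mult_distr; auto. Qed.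

Lemma rpow_rpow_inv x r : 0 < x -> 0 < r -> rpow (rpow x r) (/ r) = x.
Proof.
  intros. rewrite (rpow_Rpower x), rpow_Rpower by (auto; apply exp_pos).
  rewrite Rpower_mult, Rinv_r by lra. apply Rpower_1; auto.
Qed.

Lemma rpow_le_self x r : 0 <= x <= 1 -> 1 <= r -> rpow x r <= x.
Proof.
  intros Hx Hr. unfold rpow. destruct (Rle_dec x 0); [lra|]. unfold Rpower.
  assert (ln x <= 0).
  { rewrite <- ln_1. destruct (Req_dec x 1) as [->|]; [lra|]. left; apply ln_increasing; lra. }
  rewrite <- (exp_ln x) at 2 by lra.
  destruct (Req_dec (r * ln x) (ln x)) as [->|]; [lra|]. left. apply exp_increasing. nra.
Qed.

Lemma rpow_plus_le u v r : 0 <= u -> 0 <= v -> 0 < r ->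
  rpow (u + v) r <= Rpower 2 r * (rpow u r + rpow v r).
Proof.
  intros Hu Hv Hr. pose proof (rpow_ge0 u r). pose proof (rpow_ge0 v r).
  assert (H2 : 0 < Rpower 2 r) by apply exp_pos.
  destruct (Req_dec (Rmax u v) 0) as [Hm0|Hm0].
  - assert (u + v = 0) as -> by (unfold Rmax in *; destruct (Rle_dec u v); lra).
    unfold rpow at 1. destruct (Rle_dec 0 0); [nra|lra].
  - assert (0 < Rmax u v) by (unfold Rmax in *; destruct (Rle_dec u v); lra).
    assert (Hm : rpow (u + v) r <= rpow (2 * Rmax u v) r).
    { apply rpow_le; [lra|]. unfold Rmax; destruct (Rle_dec u v); lra. }
    rewrite rpow_mult, (rpow_Rpower 2) in Hm by lra.
    assert (rpow (Rmax u v) r <= rpow u r + rpow v r)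
      by (unfold Rmax; destruct (Rle_dec u v); lra).
    nra.
Qed.

(** * Riemann integrals of step functions *)

Lemma Riemann_integrable_const_inside (f : R -> R) a b c :
  (forall x, Rmin a b < x < Rmax a b -> c = f x) -> Riemann_integrable f a b.
Proof.
  intros H. apply Coquelicot.RInt.ex_RInt_Reals_0.
  apply (Coquelicot.RInt.ex_RInt_ext (V := Coquelicot.Hierarchy.R_NormedModule) (fun _ => c));
    [exact H | apply Coquelicot.RInt.ex_RInt_const].
Qed.

Lemma Riemann_integrable_step (f : R -> R) (L : list R) : forall a b, a <= b ->
  (forall t u, a < t -> t < u -> u < b -> (forall s, In s L -> s < t \/ u < s) -> f t = f u) ->
  Riemann_integrable f a b.
Proof.
  induction L as [|s L IH]; intros a b Hab H.
  - destruct (Req_EM_T a b) as [<-|Hne]; [apply RiemannInt_P7|].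
    apply (Riemann_integrable_const_inside f a b (f ((a + b) / 2))).
    rewrite Rmin_left, Rmax_right by lra. intros x Hx.
    destruct (Rtotal_order x ((a + b) / 2)) as [Hl|[->|Hg]].
    + symmetry; apply H; try lra. intros s [].
    + reflexivity.
    + apply H; try lra. intros s [].
  - destruct (Rlt_dec a s) as [Has|Has]; [destruct (Rlt_dec s b) as [Hsb|Hsb]|].
    + apply RiemannInt_P24 with s; apply IH; try lra; intros t u H1 H2 H3 H4;
        apply H; try lra; intros s' [<-|Hs']; auto; lra.
    + apply IH; auto. intros t u H1 H2 H3 H4. apply H; auto.
      intros s' [<-|Hs']; auto; lra.
    + apply IH; auto. intros t u H1 H2 H3 H4. apply H; auto.
      intros s' [<-|Hs']; auto; lra.
Qed.

Lemma Riemann_integrable_sub f a b a' b' :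
  Riemann_integrable f a b -> a <= a' -> a' <= b' -> b' <= b -> Riemann_integrable f a' b'.
Proof. intros pr H1 H2 H3. apply RiemannInt_P22 with b; [apply RiemannInt_P23 with a|]; auto; lra. Qed.

Lemma RiemannInt_ge_const (f : R -> R) a b v (pr : Riemann_integrable f a b) :
  a <= b -> (forall t, a < t < b -> v <= f t) -> v * (b - a) <= RiemannInt pr.
Proof. intros Hab H. rewrite <- (RiemannInt_P15 (RiemannInt_P14 a b v)). apply RiemannInt_P19; auto. Qed.

Lemma RiemannInt_le_const (f : R -> R) a b v (pr : Riemann_integrable f a b) :
  a <= b -> (forall t, a < t < b -> f t <= v) -> RiemannInt pr <= v * (b - a).
Proof. intros Hab H. rewrite <- (RiemannInt_P15 (RiemannInt_P14 a b v)). apply RiemannInt_P19; auto. Qed.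

Lemma RiemannInt_ge_steps (f : R -> R) (c U : nat -> R) P :
  (forall k, c k <= c (S k)) ->
  forall L, (forall a b, c P <= a -> a <= b -> b <= c (P + L)%nat -> Riemann_integrable f a b) ->
  (forall i, (i < L)%nat -> forall t, c (P + i)%nat < t < c (P + i + 1)%nat -> U i <= f t) ->
  forall b (pr : Riemann_integrable f (c P) b), b = c (P + L)%nat ->
  sumR L (fun i => U i * (c (P + i + 1)%nat - c (P + i)%nat)) <= RiemannInt pr.
Proof.
  intros Hc. assert (Hmono : forall k l, (k <= l)%nat -> c k <= c l).
  { intros k l Hkl. induction Hkl; [lra|]. pose proof (Hc m); lra. }
  induction L as [|L IHL]; intros Hint HU b pr Hb.
  - rewrite Nat.add_0_r in Hb. subst b. rewrite RiemannInt_P9. simpl; lra.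
  - simpl sumR.
    assert (Hb' : b = c (P + L + 1)%nat) by (subst b; f_equal; lia).
    assert (H1 : Riemann_integrable f (c P) (c (P + L)%nat))
      by (apply Hint; [lra | apply Hmono; lia | apply Hmono; lia]).
    assert (H2 : Riemann_integrable f (c (P + L)%nat) b)
      by (apply Hint; [apply Hmono; lia | subst b; apply Hmono; lia | lra]).
    rewrite <- (RiemannInt_P26 H1 H2 pr).
    assert (sumR L (fun i => U i * (c (P + i + 1)%nat - c (P + i)%nat)) <= RiemannInt H1).
    { apply IHL; auto. intros a' b' h1 h2 h3. apply Hint; auto.
      apply Rle_trans with (1 := h3). apply Hmono; lia. }
    assert (U L * (b - c (P + L)%nat) <= RiemannInt H2).
    { apply RiemannInt_ge_const; [subst b; apply Hmono; lia|].
      intros t Ht. apply HU; [lia|]. rewrite <- Hb'. auto. }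
    rewrite <- Hb'. lra.
Qed.

Lemma RiemannInt_le_steps (f : R -> R) (c V : nat -> R) :
  (forall k, c k <= c (S k)) -> (forall k, 0 <= V k) ->
  forall K a b, c 0%nat <= a -> a <= b -> b <= c K ->
  (forall a' b', a <= a' -> a' <= b' -> b' <= b -> Riemann_integrable f a' b') ->
  (forall k, (k < K)%nat -> forall t, c k < t < c (S k) -> a < t < b -> f t <= V k) ->
  forall pr : Riemann_integrable f a b, RiemannInt pr <= sumR K (fun k => V k * (c (S k) - c k)).
Proof.
  intros Hc HV.
  assert (Hpos : forall K, 0 <= sumR K (fun k => V k * (c (S k) - c k))).
  { intros K; apply sumR_ge0; intros i _. pose proof (HV i); pose proof (Hc i); nra. }
  induction K as [|K IHK]; intros a b Ha Hab Hb Hint HV' pr.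
  - assert (b = a) by lra. subst b. rewrite RiemannInt_P9. simpl; lra.
  - simpl sumR. pose proof (HV K); pose proof (Hc K).
    destruct (Rle_dec b (c K)) as [HbK|HbK].
    + assert (RiemannInt pr <= sumR K (fun k => V k * (c (S k) - c k)))
        by (apply IHK; auto; intros k hk; apply HV'; lia).
      nra.
    + destruct (Rle_dec a (c K)) as [HaK|HaK].
      * assert (H1 : Riemann_integrable f a (c K)) by (apply Hint; lra).
        assert (H2 : Riemann_integrable f (c K) b) by (apply Hint; lra).
        rewrite <- (RiemannInt_P26 H1 H2 pr).
        assert (RiemannInt H1 <= sumR K (fun k => V k * (c (S k) - c k))).
        { apply IHK; try lra; [intros; apply Hint; lra|].
          intros k hk t Ht Ht'; apply HV'; try lia; lra. }
        assert (RiemannInt H2 <= V K * (b - c K)).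
        { apply RiemannInt_le_const; [lra|]. intros t Ht. apply HV'; [lia | lra | lra]. }
        nra.
      * assert (RiemannInt pr <= V K * (b - a)).
        { apply RiemannInt_le_const; [lra|]. intros t Ht. apply HV'; [lia | lra | lra]. }
        pose proof (Hpos K). nra.
Qed.

(** * Quantile functions *)

Section Quantile.
Variables (F : R -> R) (t lo hi : R).
Hypotheses (Hlo : forall z, z < lo -> F z <= t) (Hhi : forall z, hi <= z -> t < F z).

Lemma quantile_is_lub : is_lub (fun x => F x <= t) (quantile F t).
Proof.
  apply Rsup_is_lub.
  - exists hi. intros z Hz. destruct (Rle_dec z hi); auto.
    assert (t < F z) by (apply Hhi; lra). lra.
  - exists (lo - 1). apply Hlo; lra.
Qed.

Lemma quantile_bounds : lo <= quantile F t <= hi.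
Proof.
  destruct quantile_is_lub as [Hub Hleast]. split.
  - destruct (Rle_dec lo (quantile F t)); auto. exfalso.
    assert (F ((quantile F t + lo) / 2) <= t) by (apply Hlo; lra).
    assert ((quantile F t + lo) / 2 <= quantile F t) by (apply Hub; auto). lra.
  - apply Hleast. intros z Hz. destruct (Rle_dec z hi); auto.
    assert (t < F z) by (apply Hhi; lra). lra.
Qed.

Lemma quantile_off_flat y D : 0 < D -> (forall z w, z <= w -> F z <= F w) ->
  (forall z, y - D < z < y + D -> F z = F (y - D)) ->
  y + D <= quantile F t \/ quantile F t <= y - D.
Proof.
  intros HD Hmono Hflat. destruct quantile_is_lub as [Hub Hleast].
  destruct (Rle_dec (F (y - D)) t) as [Hv|Hv].
  - left. destruct (Rle_dec (y + D) (quantile F t)); auto. exfalso.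
    set (z := (quantile F t + y + D) / 2).
    assert (F z <= t).
    { destruct (Rle_dec z (y - D)).
      - pose proof (Hmono z (y - D) r). lra.
      - rewrite Hflat; auto. unfold z in *; lra. }
    assert (z <= quantile F t) by (apply Hub; auto). unfold z in *; lra.
  - right. apply Hleast. intros z Hz. destruct (Rle_dec z (y - D)); auto. exfalso.
    destruct (Rlt_dec z (y + D)).
    + rewrite Hflat in Hz by lra. lra.
    + assert (F y <= F z) by (apply Hmono; lra). rewrite Hflat in H by lra. lra.
Qed.

End Quantile.

Lemma quantile_at_jump F t y al be :
  (forall z, z < y -> F z <= al) -> (forall z, y <= z -> be <= F z) ->
  al <= t -> t < be -> quantile F t = y.
Proof.
  intros H1 H2 H3 H4.
  assert (y <= quantile F t <= y); [|lra].
  apply quantile_bounds; intros z Hz; [specialize (H1 z Hz) | specialize (H2 z Hz)]; lra.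
Qed.

Lemma quantile_const F t u : t <= u -> (forall z, F z < t \/ u < F z) ->
  quantile F t = quantile F u.
Proof.
  intros Htu H. unfold quantile. apply Rsup_ext. intros z. split; intros Hz; [lra|].
  destruct (H z); lra.
Qed.

Fixpoint subset_sums (n : nat) (p : nat -> R) : list R :=
  match n with
  | O => 0 :: nil
  | S m => subset_sums m p ++ map (fun s => s + p m) (subset_sums m p)
  end.

Lemma disc_cdf_in_subset_sums n x p z : In (disc_cdf n x p z) (subset_sums n p).
Proof.
  induction n; simpl; [left; reflexivity|]. unfold disc_cdf in *. simpl. apply in_or_app.
  destruct (Rle_dec (x n) z).
  - right. apply in_map_iff. eexists; split; [reflexivity | auto].
  - left. rewrite Rplus_0_r. auto.
Qed.

Lemma disc_cdf_mono n x p z w : (forall i, (i < n)%nat -> 0 <= p i) -> z <= w ->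
  disc_cdf n x p z <= disc_cdf n x p w.
Proof.
  intros Hp Hzw. apply sumR_le. intros i Hi.
  destruct (Rle_dec (x i) z), (Rle_dec (x i) w); try lra. pose proof (Hp i Hi); lra.
Qed.

Lemma disc_cdf_flat n x p y D : (forall i, (i < n)%nat -> ~ (y - D < x i < y + D)) ->
  forall z, y - D < z < y + D -> disc_cdf n x p z = disc_cdf n x p (y - D).
Proof.
  intros H z Hz. apply sumR_ext. intros i Hi. pose proof (H i Hi).
  destruct (Rle_dec (x i) z), (Rle_dec (x i) (y - D)); auto; exfalso; [lra|].
  apply H0; lra.
Qed.

Lemma disc_cdf_tails n x p t Z : in_Pi n p -> 0 <= t < 1 ->
  (forall i, (i < n)%nat -> Rabs (x i) <= Z) ->
  (forall z, z < - Z -> disc_cdf n x p z <= t) /\ (forall z, Z <= z -> t < disc_cdf n x p z).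
Proof.
  intros [Hp Hs] Ht Hx. split; intros z Hz.
  - enough (disc_cdf n x p z = 0) by lra.
    unfold disc_cdf. rewrite (sumR_ext _ _ (fun _ => 0)), sumR_const; [lra|]. intros i Hi. pose proof (Hx i Hi).
    destruct (Rle_dec (x i) z); auto. unfold Rabs in H; destruct (Rcase_abs (x i)); lra.
  - enough (disc_cdf n x p z = 1) by lra. rewrite <- Hs. apply sumR_ext. intros i Hi.
    pose proof (Hx i Hi). destruct (Rle_dec (x i) z); auto. unfold Rabs in H; destruct (Rcase_abs (x i)); lra.
Qed.

Lemma quantile_disc_cdf_abs_le n x p t Z : in_Pi n p -> 0 < t < 1 ->
  (forall i, (i < n)%nat -> Rabs (x i) <= Z) -> Rabs (quantile (disc_cdf n x p) t) <= Z.
Proof.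
  intros Hp Ht Hx. destruct (disc_cdf_tails n x p t Z Hp ltac:(lra) Hx) as [Hlo Hhi].
  apply Rabs_le, quantile_bounds; auto.
Qed.

Definition block_len (N : nat -> nat) (j : nat) : nat := (2 * N (S j))%nat.

Fixpoint block_start (N : nat -> nat) (j : nat) : nat :=
  match j with O => O | S j => (block_start N j + block_len N j)%nat end.

(* [block_pos N k = (j, i)]: index [k] is the [i]-th index of block [j]. *)
Fixpoint block_pos (N : nat -> nat) (k : nat) : nat * nat :=
  match k with
  | O => (O, O)
  | S k => let (j, i) := block_pos N k in
           if Nat.ltb (S i) (block_len N j) then (j, S i) else (S j, O)
  end.

Definition block_of (N : nat -> nat) (k : nat) : nat := fst (block_pos N k).

Section Blocks.
Variable N : nat -> nat.
Hypothesis HN : forall j, (1 <= N (S j))%nat.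

Lemma block_pos_start j i : (i < block_len N j)%nat -> block_pos N (block_start N j + i) = (j, i).
Proof.
  assert (HL : forall j, (1 <= block_len N j)%nat) by (intros j'; specialize (HN j'); unfold block_len; lia).
  revert i; induction j; induction i; intros Hi.
  - reflexivity.
  - rewrite Nat.add_succ_r. cbn [block_pos]. rewrite IHi by lia.
    replace (Nat.ltb (S i) (block_len N 0)) with true; auto. symmetry; apply Nat.ltb_lt; lia.
  - pose proof (HL j). simpl block_start.
    replace (block_start N j + block_len N j + 0)%nat
      with (S (block_start N j + (block_len N j - 1)))%nat by lia.
    cbn [block_pos]. rewrite IHj by lia.
    replace (Nat.ltb (S (block_len N j - 1)) (block_len N j)) with false; auto.
    symmetry; apply Nat.ltb_ge; lia.
  - rewrite Nat.add_succ_r. cbn [block_pos]. rewrite IHi by lia.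
    replace (Nat.ltb (S i) (block_len N (S j))) with true; auto. symmetry; apply Nat.ltb_lt; lia.
Qed.

Lemma block_of_start j i : (i < block_len N j)%nat -> block_of N (block_start N j + i) = j.
Proof. intros. unfold block_of. rewrite block_pos_start; auto. Qed.

Lemma block_start_ge j : (j <= block_start N j)%nat.
Proof. induction j; simpl; auto. specialize (HN j). unfold block_len. lia. Qed.

Lemma sumR_by_blocks (g : nat -> R) J :
  sumR (block_start N J) (fun k => g (block_of N k)) = sumR J (fun j => INR (block_len N j) * g j).
Proof.
  induction J; simpl; auto. rewrite sumR_split, IHJ.
  rewrite (sumR_ext (block_len N J) _ (fun _ => g J)), sumR_const; auto.
  intros i Hi. rewrite block_of_start; auto.
Qed.

End Blocks.

Lemma pow3_ge k : INR k + 1 <= 3 ^ k.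
Proof. induction k; [simpl; lra|]. rewrite S_INR. simpl. pose proof (pos_INR k). lra. Qed.

Lemma sumR_geom4 J : sumR J (fun j => 2 * (/4) ^ S j) = 2/3 * (1 - (/4) ^ J).
Proof. induction J; [simpl; lra|]. change (sumR (S J) ?f) with (sumR J f + f J). rewrite IHJ. simpl. field. Qed.

(** * The measure *)

Section Construction.
Variables (r B : R) (N : nat -> nat).
Hypotheses (Hr : 1 <= r) (HB : 1 <= B) (HN : forall j, (1 <= N (S j))%nat).

Definition weight (j : nat) : R := (/4) ^ S j / INR (N (S j)).
Definition radius (k : nat) : R := B * 3 ^ k.
Definition atom (k : nat) : R := 3 * radius k.
Definition mass (k : nat) : R := weight (block_of N k) * rpow B r / rpow (radius k) r.
Definition cmass (k : nat) : R := sumR k mass.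
Definition total_mass : R := Rsup (fun s => exists k, s = cmass k).
Definition mass0 : R := 1 - total_mass.
Definition mass_upto (z : R) (k : nat) : R := if Rle_dec (atom k) z then mass k else 0.

(* Only atoms with index below [up z] can lie left of [z], since [atom k > k]. *)
Definition Fmu (z : R) : R :=
  (if Rle_dec 0 z then mass0 else 0) + sumR (Z.to_nat (up z)) (mass_upto z).

Definition level (k : nat) : R := match k with O => 0 | S k => mass0 + cmass k end.
Definition level_value (k : nat) : R := match k with O => 0 | S k => atom k end.

Lemma radius_pos k : 0 < radius k.
Proof. unfold radius. pose proof (pow3_ge k); pose proof (pos_INR k). nra. Qed.

Lemma radius_ge_B k : B <= radius k.
Proof. unfold radius. pose proof (pow3_ge k); pose proof (pos_INR k). nra. Qed.

Lemma radius_S k : radius (S k) = 3 * radius k.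
Proof. unfold radius. simpl. ring. Qed.

Lemma radius_le k l : (k <= l)%nat -> radius k <= radius l.
Proof. induction 1; [lra|]. rewrite radius_S. pose proof (radius_pos m). lra. Qed.

Lemma atom_gt k : INR k < atom k.
Proof. unfold atom, radius. pose proof (pow3_ge k); pose proof (pos_INR k). nra. Qed.

Lemma atom_le k l : (k <= l)%nat -> atom k <= atom l.
Proof. intros. unfold atom. pose proof (radius_le k l H). lra. Qed.

Lemma weight_pos j : 0 < weight j.
Proof.
  apply Rdiv_lt_0_compat; [apply pow_lt; lra|]. apply lt_0_INR. specialize (HN j). lia.
Qed.

Lemma mass_pos k : 0 < mass k.
Proof.
  apply Rdiv_lt_0_compat; [apply Rmult_lt_0_compat|].
  - apply weight_pos.
  - apply rpow_gt0; lra.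
  - apply rpow_gt0, radius_pos.
Qed.

Lemma mass_radius k : mass k * rpow (radius k) r = weight (block_of N k) * rpow B r.
Proof. unfold mass. pose proof (rpow_gt0 _ r (radius_pos k)). field. lra. Qed.

Lemma mass_le_weight k : mass k <= weight (block_of N k).
Proof.
  pose proof (mass_radius k). pose proof (weight_pos (block_of N k)).
  pose proof (mass_pos k). pose proof (rpow_gt0 B r ltac:(lra)).
  assert (rpow B r <= rpow (radius k) r) by (apply rpow_le; [lra | pose proof (radius_ge_B k); lra]).
  nra.
Qed.

Lemma sumR_weight_le K : sumR K (fun k => weight (block_of N k)) <= 2/3.
Proof.
  apply Rle_trans with (sumR (block_start N K) (fun k => weight (block_of N k))).
  - apply sumR_le_length; [apply block_start_ge; auto | intros; left; apply weight_pos].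
  - rewrite sumR_by_blocks by auto.
    rewrite (sumR_ext _ _ (fun j => 2 * (/4) ^ S j)), sumR_geom4.
    + assert (0 <= (/4) ^ K) by (apply pow_le; lra). lra.
    + intros j _. unfold block_len, weight. rewrite mult_INR.
      assert (0 < INR (N (S j))) by (apply lt_0_INR; specialize (HN j); lia).
      simpl (INR 2). field. lra.
Qed.

Lemma cmass_S k : cmass (S k) = cmass k + mass k.
Proof. reflexivity. Qed.

Lemma cmass_le k : cmass k <= 2/3.
Proof.
  apply Rle_trans with (sumR k (fun k => weight (block_of N k))); [|apply sumR_weight_le].
  apply sumR_le; intros; apply mass_le_weight.
Qed.

Lemma cmass_le_mono k l : (k <= l)%nat -> cmass k <= cmass l.
Proof. intros. apply sumR_le_length; auto. intros; left; apply mass_pos. Qed.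

Lemma cmass_ge0 k : 0 <= cmass k.
Proof. apply (cmass_le_mono 0 k). lia. Qed.

Lemma moment_sum K : sumR K (fun k => mass k * rpow (atom k) r) <= rpow 3 r * rpow B r * (2/3).
Proof.
  rewrite (sumR_ext _ _ (fun k => (rpow 3 r * rpow B r) * weight (block_of N k))), sumR_scal.
  - pose proof (sumR_weight_le K). pose proof (rpow_ge0 3 r). pose proof (rpow_ge0 B r).
    assert (0 <= rpow 3 r * rpow B r) by nra. nra.
  - intros k _. unfold atom. rewrite rpow_mult by (lra || apply radius_pos).
    replace (mass k * (rpow 3 r * rpow (radius k) r))
      with (rpow 3 r * (mass k * rpow (radius k) r)) by ring.
    rewrite mass_radius. ring.
Qed.

Lemma total_mass_is_lub : is_lub (fun s => exists k, s = cmass k) total_mass.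
Proof.
  apply Rsup_is_lub; [|exists (cmass 0); eauto]. exists (2/3). intros s [k ->]. apply cmass_le.
Qed.

Lemma cmass_lt_total k : cmass k < total_mass.
Proof.
  destruct total_mass_is_lub as [Hub _].
  assert (cmass (S k) <= total_mass) by (apply Hub; eauto).
  rewrite cmass_S in H. pose proof (mass_pos k). lra.
Qed.

Lemma mass0_ge : 1/3 <= mass0.
Proof.
  destruct total_mass_is_lub as [_ Hleast].
  assert (total_mass <= 2/3) by (apply Hleast; intros s [k ->]; apply cmass_le).
  unfold mass0. lra.
Qed.

Lemma cmass_approx b : b < total_mass -> exists k, b < cmass k.
Proof.
  intros Hb. destruct total_mass_is_lub as [_ Hleast].
  apply NNPP. intros Hno.
  assert (total_mass <= b); [|lra].
  apply Hleast. intros s [k ->]. apply Rnot_lt_le. intros Hk. apply Hno. eauto.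
Qed.

Lemma level_le_S k : level k <= level (S k).
Proof.
  destruct k; simpl; [pose proof mass0_ge; pose proof (cmass_ge0 0); lra|].
  rewrite cmass_S. pose proof (mass_pos k). lra.
Qed.

Lemma level_le k l : (k <= l)%nat -> level k <= level l.
Proof. induction 1; [lra|]. pose proof (level_le_S m). lra. Qed.

Lemma level_bounds k : 0 <= level k < 1.
Proof.
  destruct k; simpl; [lra|]. pose proof mass0_ge. pose proof (cmass_ge0 k).
  pose proof (cmass_lt_total k). unfold mass0 in *. lra.
Qed.

Lemma level_approx b : b < 1 -> exists K, b <= level K.
Proof.
  intros Hb. destruct (cmass_approx (b - mass0)) as [k Hk]; [unfold mass0; lra|].
  exists (S k). simpl. lra.
Qed.

Lemma mass_upto_bounds z k : 0 <= mass_upto z k <= mass k.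
Proof. unfold mass_upto. pose proof (mass_pos k). destruct (Rle_dec (atom k) z); lra. Qed.

Lemma lt_atom_from_up z k : (Z.to_nat (up z) <= k)%nat -> z < atom k.
Proof.
  intros Hk. pose proof (atom_gt k). destruct (archimed z) as [H1 _].
  destruct (Z_le_gt_dec (up z) 0).
  - assert (IZR (up z) <= 0) by (apply IZR_le; auto). pose proof (pos_INR k). lra.
  - assert (INR (Z.to_nat (up z)) <= INR k) by (apply le_INR; auto).
    rewrite INR_IZR_INZ, Z2Nat.id in H0 by lia. lra.
Qed.

Lemma Fmu_eq z M : (forall k, (M <= k)%nat -> z < atom k) ->
  Fmu z = (if Rle_dec 0 z then mass0 else 0) + sumR M (mass_upto z).
Proof.
  intros HM.
  assert (Hstable : forall M1 M2, (forall k, (M1 <= k)%nat -> z < atom k) -> (M1 <= M2)%nat ->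
            sumR M2 (mass_upto z) = sumR M1 (mass_upto z)).
  { intros M1 M2 H Hle. replace M2 with (M1 + (M2 - M1))%nat by lia.
    rewrite sumR_split, (sumR_ext (M2 - M1) _ (fun _ => 0)), sumR_const; [lra|].
    intros i Hi. unfold mass_upto. destruct (Rle_dec (atom (M1 + i)) z); auto.
    specialize (H (M1 + i)%nat ltac:(lia)). lra. }
  unfold Fmu. f_equal. set (M' := Nat.max M (Z.to_nat (up z))).
  rewrite <- (Hstable (Z.to_nat (up z)) M'), (Hstable M M'); auto; try lia.
  intros k Hk. apply lt_atom_from_up. auto.
Qed.

Lemma Fmu_neg z : z < 0 -> Fmu z = 0.
Proof.
  intros Hz. rewrite (Fmu_eq z 0).
  - destruct (Rle_dec 0 z); [lra|]. simpl; lra.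
  - intros k _. pose proof (atom_gt k). pose proof (pos_INR k). lra.
Qed.

Lemma Fmu_ge_mass0 z : 0 <= z -> mass0 <= Fmu z.
Proof.
  intros Hz. unfold Fmu. destruct (Rle_dec 0 z); [|lra].
  assert (0 <= sumR (Z.to_nat (up z)) (mass_upto z)) by (apply sumR_ge0; intros; apply mass_upto_bounds).
  lra.
Qed.

Lemma Fmu_lt_atom z k : z < atom k -> Fmu z <= mass0 + cmass k.
Proof.
  intros Hz. rewrite (Fmu_eq z k).
  - assert (sumR k (mass_upto z) <= cmass k) by (apply sumR_le; intros; apply mass_upto_bounds).
    pose proof mass0_ge. destruct (Rle_dec 0 z); lra.
  - intros l Hl. pose proof (atom_le k l Hl). lra.
Qed.

Lemma Fmu_ge_atom z k : atom k <= z -> mass0 + cmass (S k) <= Fmu z.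
Proof.
  intros Hz. pose proof (atom_gt k). pose proof (pos_INR k).
  rewrite (Fmu_eq z (S k + Z.to_nat (up z))).
  - destruct (Rle_dec 0 z); [|lra]. rewrite sumR_split.
    assert (0 <= sumR (Z.to_nat (up z)) (fun i => mass_upto z (S k + i)))
      by (apply sumR_ge0; intros; apply mass_upto_bounds).
    assert (sumR (S k) (mass_upto z) = cmass (S k)); [|lra].
    apply sumR_ext. intros i Hi. unfold mass_upto. destruct (Rle_dec (atom i) z); auto.
    pose proof (atom_le i k ltac:(lia)). lra.
  - intros l Hl. apply lt_atom_from_up. lia.
Qed.

Lemma Fmu_values z : 0 <= z -> exists m, Fmu z = mass0 + cmass m.
Proof.
  intros Hz. unfold Fmu. destruct (Rle_dec 0 z); [|lra].
  enough (forall M, exists m, sumR M (mass_upto z) = cmass m) as HM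
    by (destruct (HM (Z.to_nat (up z))) as [m ->]; eauto).
  induction M as [|M [m Hm]]; [exists 0%nat; reflexivity|].
  destruct (Rle_dec (atom M) z) as [HMz|HMz].
  - exists (S M). simpl sumR. unfold cmass. simpl sumR. f_equal.
    + apply sumR_ext. intros i Hi. unfold mass_upto. destruct (Rle_dec (atom i) z); auto.
      pose proof (atom_le i M ltac:(lia)). lra.
    + unfold mass_upto. destruct (Rle_dec (atom M) z); [auto | lra].
  - exists m. simpl sumR. unfold mass_upto at 2. destruct (Rle_dec (atom M) z); [lra|].
    rewrite Hm. ring.
Qed.

Lemma Fmu_mono z w : z <= w -> Fmu z <= Fmu w.
Proof.
  intros Hzw. rewrite (Fmu_eq z (Z.to_nat (up w))).
  - unfold Fmu. apply Rplus_le_compat.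
    + pose proof mass0_ge. destruct (Rle_dec 0 z), (Rle_dec 0 w); lra.
    + apply sumR_le. intros i _. unfold mass_upto. pose proof (mass_pos i).
      destruct (Rle_dec (atom i) z), (Rle_dec (atom i) w); lra.
  - intros k Hk. pose proof (lt_atom_from_up w k Hk). lra.
Qed.

Lemma atoms_gap x M : exists d, 0 < d /\ forall k, (k < M)%nat -> atom k <= x \/ x + d <= atom k.
Proof.
  induction M as [|M [d [Hd H]]]; [exists 1; split; [lra | intros; lia]|].
  destruct (Rle_dec (atom M) x).
  - exists d; split; auto. intros k Hk. destruct (Nat.eq_dec k M) as [->|]; auto. apply H; lia.
  - exists (Rmin d (atom M - x)). split; [apply Rmin_pos; lra|].
    pose proof (Rmin_l d (atom M - x)). pose proof (Rmin_r d (atom M - x)).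
    intros k Hk. destruct (Nat.eq_dec k M) as [->|]; [right; lra|].
    destruct (H k ltac:(lia)); [auto | right; lra].
Qed.

Lemma Fmu_is_cdf : is_cdf Fmu.
Proof.
  split; [|split; [|split]].
  - intros; apply Fmu_mono; auto.
  - intros x eps Heps. set (M := Z.to_nat (up (x + 1))).
    destruct (atoms_gap x M) as [d0 [Hd0 Hgap]].
    set (dx := if Rlt_dec x 0 then - x else 1).
    assert (Hdx : 0 < dx) by (unfold dx; destruct (Rlt_dec x 0); lra).
    set (d := Rmin d0 (Rmin 1 dx)).
    assert (d <= d0 /\ d <= 1 /\ d <= dx /\ 0 < d) as [Hd1 [Hd2 [Hd3 Hd4]]].
    { unfold d. repeat split; try (apply Rmin_pos; [|apply Rmin_pos]; lra).
      - apply Rmin_l.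
      - eapply Rle_trans; [apply Rmin_r | apply Rmin_l].
      - eapply Rle_trans; [apply Rmin_r | apply Rmin_r]. }
    exists d. split; auto. intros y Hxy Hy.
    assert (HM : forall z, z <= x + 1 -> forall k, (M <= k)%nat -> z < atom k).
    { intros z Hz k Hk. pose proof (lt_atom_from_up (x + 1) k Hk). lra. }
    rewrite (Fmu_eq y M), (Fmu_eq x M) by (apply HM; lra).
    assert (Hs : sumR M (mass_upto y) = sumR M (mass_upto x)).
    { apply sumR_ext. intros k Hk. unfold mass_upto.
      destruct (Hgap k Hk), (Rle_dec (atom k) y), (Rle_dec (atom k) x); auto; lra. }
    rewrite Hs. unfold dx in Hd3.
    destruct (Rlt_dec x 0), (Rle_dec 0 y), (Rle_dec 0 x); lra.
  - intros eps Heps. exists (-1). intros x Hx. rewrite Fmu_neg; lra.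
  - intros eps Heps. destruct (cmass_approx (total_mass - eps)) as [k Hk]; [lra|].
    exists (atom k). intros x Hx. pose proof (Fmu_ge_atom x k Hx).
    rewrite cmass_S in H. pose proof (mass_pos k). unfold mass0 in *. lra.
Qed.

Lemma quantile_Fmu k t : level k < t < level (S k) -> quantile Fmu t = level_value k.
Proof.
  intros Ht. destruct k; simpl in *.
  - apply (quantile_at_jump _ _ _ 0 mass0).
    + intros z hz. rewrite Fmu_neg; lra.
    + intros z hz. apply Fmu_ge_mass0; lra.
    + lra.
    + unfold cmass in Ht; simpl in Ht; lra.
  - apply (quantile_at_jump _ _ _ (mass0 + cmass k) (mass0 + cmass (S k))).
    + intros z hz. apply Fmu_lt_atom; auto.
    + intros z hz. apply Fmu_ge_atom; auto.
    + lra.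
    + lra.
Qed.

Lemma level_value_ge0 k : 0 <= level_value k.
Proof. destruct k; simpl; [lra|]. pose proof (atom_gt k). pose proof (pos_INR k). lra. Qed.

Lemma moment_steps K :
  sumR K (fun k => rpow (level_value k) r * (level (S k) - level k)) <= rpow 3 r * rpow B r * (2/3).
Proof.
  destruct K.
  - simpl. pose proof (rpow_ge0 3 r); pose proof (rpow_ge0 B r). nra.
  - rewrite sumR_shift. simpl level_value. unfold rpow at 1. destruct (Rle_dec 0 0); [|lra].
    rewrite (sumR_ext _ _ (fun k => mass k * rpow (atom k) r)).
    + pose proof (moment_sum K). lra.
    + intros i _. simpl. rewrite cmass_S. ring.
Qed.

Lemma int01_set_le_steps f V : (forall k, 0 <= V k) ->
  (forall k t, level k < t < level (S k) -> f t <= V k) ->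
  forall J, int01_set f J -> exists K, J <= sumR K (fun k => V k * (level (S k) - level k)).
Proof.
  intros HV Hf J [a [b [pr [Ha [Hab [Hb <-]]]]]].
  destruct (level_approx b Hb) as [K HK]. exists K.
  apply (RiemannInt_le_steps f level V); auto.
  - apply level_le_S.
  - simpl; lra.
  - intros. apply (Riemann_integrable_sub f a b); auto.
Qed.

Lemma in_Pr_Fmu : in_Pr r Fmu.
Proof.
  split; [apply Fmu_is_cdf|]. exists (rpow 3 r * rpow B r * (2/3)). intros J HJ.
  assert (Hstep : forall k t, level k < t < level (S k) ->
            rpow (Rabs (quantile Fmu t)) r <= rpow (level_value k) r).
  { intros k t Ht. rewrite (quantile_Fmu k t Ht), Rabs_right; [lra|].
    apply Rle_ge, level_value_ge0. }
  destruct (int01_set_le_steps _ _ (fun k => rpow_ge0 _ r) Hstep J HJ) as [K HK].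
  pose proof (moment_steps K). lra.
Qed.

Definition integrand n (x p : nat -> R) (t : R) : R :=
  rpow (Rabs (quantile (disc_cdf n x p) t - quantile Fmu t)) r.

Lemma integrand_integrable n x p a b : a <= b -> b < 1 -> Riemann_integrable (integrand n x p) a b.
Proof.
  intros Hab Hb. destruct (constructive_indefinite_description _ (level_approx b Hb)) as [K HK].
  apply (Riemann_integrable_step _ (subset_sums n p ++ map level (seq 0 (S K)))); auto.
  assert (Hlevel : forall k, (k <= K)%nat -> In (level k) (subset_sums n p ++ map level (seq 0 (S K))))
    by (intros k Hk; apply in_or_app; right; apply in_map_iff; exists k; split; auto; apply in_seq; lia).
  intros t u Ht Htu Hu Hout. unfold integrand. do 3 f_equal.
  - apply quantile_const; [lra|]. intros z. apply Hout, in_or_app. left. apply disc_cdf_in_subset_sums.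
  - apply quantile_const; [lra|]. intros z. destruct (Rlt_dec z 0).
    + rewrite Fmu_neg by auto. apply (Hout (level 0)), Hlevel. lia.
    + destruct (Fmu_values z ltac:(lra)) as [m ->].
      destruct (le_lt_dec (S m) K) as [HmK|HmK].
      * apply (Hout (level (S m))), Hlevel. auto.
      * right. pose proof (level_le K (S m) ltac:(lia)). simpl in H. lra.
Qed.

Lemma abs_le_sumR_abs n (x : nat -> R) i : (i < n)%nat -> Rabs (x i) <= sumR n (fun i => Rabs (x i)).
Proof. intros Hi. apply (sumR_term_le n (fun i => Rabs (x i))); auto. intros; apply Rabs_pos. Qed.

Lemma integrand_int01_finite n x p : in_Pi n p -> int01_finite (integrand n x p).
Proof.
  intros Hp. set (Z := sumR n (fun i => Rabs (x i))).
  assert (HZ0 : 0 <= Z) by (apply sumR_ge0; intros; apply Rabs_pos).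
  assert (H2 : 0 < Rpower 2 r) by apply exp_pos.
  set (V := fun k => Rpower 2 r * (rpow Z r + rpow (level_value k) r)).
  assert (HV : forall k, 0 <= V k).
  { intros k. unfold V. pose proof (rpow_ge0 Z r); pose proof (rpow_ge0 (level_value k) r). nra. }
  assert (Hstep : forall k t, level k < t < level (S k) -> integrand n x p t <= V k).
  { intros k t Ht. unfold integrand, V. rewrite (quantile_Fmu k t Ht).
    pose proof (level_bounds k); pose proof (level_bounds (S k)); pose proof (level_value_ge0 k).
    pose proof (quantile_disc_cdf_abs_le n x p t Z Hp ltac:(lra) (abs_le_sumR_abs n x)).
    apply Rle_trans with (rpow (Z + level_value k) r); [|apply rpow_plus_le; lra].
    apply rpow_le; [lra|]. split; [apply Rabs_pos|].
    eapply Rle_trans; [apply Rabs_triang|]. rewrite Rabs_Ropp, (Rabs_right (level_value k)); lra. }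
  exists (Rpower 2 r * (rpow Z r + rpow 3 r * rpow B r * (2/3))). intros J HJ.
  destruct (int01_set_le_steps _ V HV Hstep J HJ) as [K HK].
  rewrite (sumR_ext _ _ (fun k => Rpower 2 r * rpow Z r * (level (S k) - level k) +
             Rpower 2 r * (rpow (level_value k) r * (level (S k) - level k)))) in HK
    by (intros; unfold V; ring).
  rewrite sumR_plus, !sumR_scal, sumR_telescope in HK. simpl (level 0) in HK.
  pose proof (moment_steps K). pose proof (level_bounds K). pose proof (rpow_ge0 Z r).
  assert (0 <= Rpower 2 r * rpow Z r) by nra.
  assert (Rpower 2 r * rpow Z r * (level K - 0) <= Rpower 2 r * rpow Z r) by nra.
  nra.
Qed.

Definition unserved n (x : nat -> R) (k : nat) : Prop :=
  forall m, (m < n)%nat -> ~ (2 * radius k < x m < 4 * radius k).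

Definition unserved_ind n (x : nat -> R) (k : nat) : R :=
  if excluded_middle_informative (unserved n x k) then 1 else 0.

Definition window (k : nat) (z : R) : R :=
  if Rlt_dec (2 * radius k) z then if Rlt_dec z (4 * radius k) then 1 else 0 else 0.

Lemma window_bounds k z : 0 <= window k z <= 1.
Proof. unfold window. destruct (Rlt_dec _ _); [destruct (Rlt_dec _ _)|]; lra. Qed.

(* The windows are disjoint: [4 * radius k < 2 * radius (S k)]. *)
Lemma sumR_window_le1 z P L : sumR L (fun i => window (P + i) z) <= 1.
Proof.
  induction L; simpl; [lra|].
  unfold window at 2. destruct (Rlt_dec (2 * radius (P + L)) z) as [H1|]; [|lra].
  destruct (Rlt_dec z (4 * radius (P + L))) as [H2|]; [|lra].
  rewrite (sumR_ext _ _ (fun _ => 0)), sumR_const; [lra|].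
  intros i Hi. unfold window. destruct (Rlt_dec (2 * radius (P + i)) z); auto.
  destruct (Rlt_dec z (4 * radius (P + i))); auto. exfalso.
  pose proof (radius_le (S (P + i)) (P + L) ltac:(lia)). rewrite radius_S in H.
  pose proof (radius_pos (P + i)). lra.
Qed.

Lemma served_le_windows n x k : 1 - unserved_ind n x k <= sumR n (fun m => window k (x m)).
Proof.
  assert (0 <= sumR n (fun m => window k (x m))) by (apply sumR_ge0; intros; apply window_bounds).
  unfold unserved_ind. destruct (excluded_middle_informative (unserved n x k)) as [|Hs]; [lra|].
  apply not_all_ex_not in Hs as [m Hm]. apply imply_to_and in Hm as [Hm Hin]. apply NNPP in Hin.
  assert (window k (x m) = 1)
    by (unfold window; destruct (Rlt_dec (2 * radius k) (x m)), (Rlt_dec (x m) (4 * radius k)); lra).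
  assert (window k (x m) <= sumR n (fun m => window k (x m)))
    by (apply (sumR_term_le n (fun m => window k (x m))); auto; intros; apply window_bounds).
  lra.
Qed.

(* Each of the [n] points lies in at most one window. *)
Lemma count_unserved n x P L : INR L - INR n <= sumR L (fun i => unserved_ind n x (P + i)).
Proof.
  assert (sumR L (fun i => 1 - unserved_ind n x (P + i)) <= INR n); [|rewrite sumR_minus, sumR_const in H; lra].
  apply Rle_trans with (sumR L (fun i => sumR n (fun m => window (P + i) (x m)))).
  - apply sumR_le. intros i _. apply served_le_windows.
  - rewrite sumR_swap, <- (Rmult_1_r (INR n)), <- sumR_const.
    apply sumR_le. intros m _. apply sumR_window_le1.
Qed.

Lemma integrand_ge_unserved n x p k t : in_Pi n p -> unserved n x k ->
  level (S k) < t < level (S (S k)) -> rpow (radius k) r <= integrand n x p t.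
Proof.
  intros Hp Hu Ht. unfold integrand. rewrite (quantile_Fmu (S k) t Ht). simpl level_value.
  pose proof (level_bounds (S k)); pose proof (level_bounds (S (S k))); pose proof (radius_pos k).
  destruct (disc_cdf_tails n x p t _ Hp ltac:(lra) (abs_le_sumR_abs n x)) as [Hlo Hhi].
  assert (Hflat : forall i, (i < n)%nat -> ~ (atom k - radius k < x i < atom k + radius k))
    by (intros i Hi Hx; apply (Hu i Hi); unfold atom in Hx; lra).
  destruct (quantile_off_flat _ _ _ _ Hlo Hhi (atom k) (radius k) ltac:(lra)
              (fun z w => disc_cdf_mono n x p z w (proj1 Hp)) (disc_cdf_flat n x p _ _ Hflat));
    apply rpow_le; try lra; split; try lra; unfold Rabs; destruct (Rcase_abs _); lra.
Qed.

Lemma block_unserved_mass n x j : (n < N (S j))%nat ->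
  rpow B r * (/4) ^ S j <= sumR (block_len N j) (fun i =>
    unserved_ind n x (block_start N j + i) * rpow (radius (block_start N j + i)) r
      * mass (block_start N j + i)).
Proof.
  intros Hn. set (P := block_start N j).
  rewrite (sumR_ext _ _ (fun i => weight j * rpow B r * unserved_ind n x (P + i))), sumR_scal.
  - pose proof (count_unserved n x P (block_len N j)).
    assert (INR (block_len N j) = 2 * INR (N (S j))) by (unfold block_len; rewrite mult_INR; reflexivity).
    assert (INR n <= INR (N (S j))) by (apply le_INR; lia).
    assert (0 < INR (N (S j))) by (apply lt_0_INR; specialize (HN j); lia).
    assert (weight j * INR (N (S j)) = (/4) ^ S j) by (unfold weight; field; lra).
    pose proof (weight_pos j). pose proof (rpow_gt0 B r ltac:(lra)).
    assert (0 < weight j * rpow B r) by nra. nra.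
  - intros i Hi. rewrite Rmult_assoc, (Rmult_comm (rpow _ r)), mass_radius. unfold P. rewrite block_of_start; auto. ring.
Qed.

Lemma integrand_block_lower n x p j : in_Pi n p -> (n < N (S j))%nat ->
  exists J, int01_set (integrand n x p) J /\ rpow (B * (/4) ^ S j) r <= J.
Proof.
  intros Hp Hn. set (P := block_start N j). set (L := block_len N j).
  set (c := fun k => level (S k)).
  assert (Hc : forall k, 0 < c k < 1).
  { intros k. unfold c. simpl. pose proof mass0_ge. pose proof (cmass_ge0 k).
    pose proof (level_bounds (S k)). simpl in *. lra. }
  assert (Hcle : forall k l, (k <= l)%nat -> c k <= c l) by (intros; apply level_le; lia).
  assert (pr : Riemann_integrable (integrand n x p) (c P) (c (P + L)%nat))
    by (apply integrand_integrable; [apply Hcle; lia | apply Hc]).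
  exists (RiemannInt pr). split.
  { exists (c P), (c (P + L)%nat), pr. repeat split; try apply Hc. apply Hcle; lia. }
  assert (Hpow : rpow (B * (/4) ^ S j) r <= rpow B r * (/4) ^ S j).
  { assert (0 <= (/4) ^ S j <= 1) by (split; [apply pow_le; lra | rewrite <- (pow1 (S j)); apply pow_incr; lra]).
    rewrite rpow_mult by (try lra; apply pow_lt; lra).
    pose proof (rpow_le_self _ r H Hr). pose proof (rpow_ge0 B r). nra. }
  eapply Rle_trans; [apply Hpow|]. eapply Rle_trans; [apply (block_unserved_mass n x j Hn)|].
  set (U := fun i => unserved_ind n x (P + i) * rpow (radius (P + i)) r).
  replace (sumR _ _) with (sumR L (fun i => U i * (c (P + i + 1)%nat - c (P + i)%nat))).
  - apply RiemannInt_ge_steps; auto.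
    + intros a' b' H1 H2 H3. apply integrand_integrable; [lra|]. pose proof (Hc (P + L)%nat); lra.
    + intros i Hi t Ht. unfold U, unserved_ind.
      destruct (excluded_middle_informative (unserved n x (P + i))); [|rewrite Rmult_0_l; apply rpow_ge0].
      rewrite Rmult_1_l. apply integrand_ge_unserved; auto.
      unfold c in Ht. replace (P + i + 1)%nat with (S (P + i)) in Ht by lia. auto.
  - apply sumR_ext. intros i _. unfold U, c. replace (P + i + 1)%nat with (S (P + i)) by lia.
    simpl level. rewrite cmass_S. unfold P. ring.
Qed.

End Construction.
(** * Choosing the block sizes *)

Lemma Un_cv0_abs_bound (a : nat -> R) : Un_cv a 0 -> exists B, 1 <= B /\ forall m, Rabs (a m) <= B / 4.
Proof.
  intros Hcv. destruct (Hcv 1 ltac:(lra)) as [M HM].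
  assert (0 <= sumR M (fun i => Rabs (a i))) by (apply sumR_ge0; intros; apply Rabs_pos).
  exists (4 * (1 + sumR M (fun i => Rabs (a i)))). split; [lra|]. intros m.
  destruct (le_lt_dec M m) as [HMm|HmM].
  - specialize (HM m HMm). unfold R_dist in HM. rewrite Rminus_0_r in HM. lra.
  - pose proof (abs_le_sumR_abs M a m HmM). lra.
Qed.

Lemma Un_cv0_thresholds (a : nat -> R) B : 0 < B -> Un_cv a 0 -> (forall m, Rabs (a m) <= B / 4) ->
  exists N : nat -> nat, N 0%nat = 0%nat /\ (forall j, (N j < N (S j))%nat) /\
    forall j m, (N j <= m)%nat -> a m <= B * (/4) ^ S j.
Proof.
  intros HB Hcv Hbound.
  assert (Hj : forall j, exists M, forall m, (M <= m)%nat -> Rabs (a m) < B * (/4) ^ S (S j)).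
  { intros j. destruct (Hcv (B * (/4) ^ S (S j))) as [M HM].
    - apply Rmult_lt_0_compat; [lra | apply pow_lt; lra].
    - exists M. intros m Hm. specialize (HM m Hm). unfold R_dist in HM. rewrite Rminus_0_r in HM. auto. }
  destruct (choice _ Hj) as [g Hg].
  set (N := fix N j := match j with O => O | S j => Nat.max (S (N j)) (g j) end).
  assert (HNS : forall j, N (S j) = Nat.max (S (N j)) (g j)) by reflexivity.
  exists N. split; [reflexivity|]. split; [intros j; rewrite HNS; lia|].
  intros [|j] m Hm; apply Rle_trans with (1 := Rle_abs (a m)).
  - replace (B * (/4) ^ 1) with (B / 4) by (simpl; field). apply Hbound.
  - left. apply Hg. rewrite HNS in Hm. lia.
Qed.

Lemma nat_in_block (N : nat -> nat) : N 0%nat = 0%nat -> (forall j, (N j < N (S j))%nat) ->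
  forall n, exists j, (N j <= n < N (S j))%nat.
Proof.
  intros H0 Hs. induction n as [|n [j Hj]]; [exists 0%nat; rewrite H0; specialize (Hs 0%nat); lia|].
  destruct (le_lt_dec (N (S j)) (S n)).
  - exists (S j). specialize (Hs (S j)). lia.
  - exists j. lia.
Qed.

Lemma le_d_r r F G c J : 0 < r -> 0 <= c ->
  int01_finite (fun t => rpow (Rabs (quantile F t - quantile G t)) r) ->
  int01_set (fun t => rpow (Rabs (quantile F t - quantile G t)) r) J -> rpow c r <= J ->
  c <= d_r r F G.
Proof.
  intros Hr Hc [M HM] HJ HcJ. unfold d_r.
  assert (J <= int01 (fun t => rpow (Rabs (quantile F t - quantile G t)) r))
    by (apply (Rsup_is_lub _ (ex_intro _ M HM) (ex_intro _ J HJ)); auto).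
  destruct (Req_dec c 0) as [->|]; [apply rpow_ge0|].
  rewrite <- (rpow_rpow_inv c r) by lra.
  apply rpow_le; [left; apply Rinv_0_lt_compat; lra|]. split; [apply rpow_ge0 | lra].
Qed.

Theorem theorem5p12 :
  forall (r : R) (a : nat -> R),
    1 <= r ->
    (forall n, (1 <= n)%nat -> 0 <= a n) ->
    Un_cv a 0 ->
    exists F : R -> R,
      in_Pr r F /\
      forall n : nat, (1 <= n)%nat ->
        forall x p : nat -> R, in_Xi n x -> in_Pi n p ->
          a n <= d_r r (disc_cdf n x p) F.
Proof.
  intros r a Hr _ Hcv.
  destruct (Un_cv0_abs_bound a Hcv) as [B [HB Hbound]].
  destruct (Un_cv0_thresholds a B ltac:(lra) Hcv Hbound) as [N [HN0 [HNs HaN]]].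
  assert (HN : forall j, (1 <= N (S j))%nat) by (intros j; specialize (HNs j); lia).
  exists (Fmu r B N). split; [apply in_Pr_Fmu; auto|].
  intros n _ x p _ Hp.
  destruct (nat_in_block N HN0 HNs n) as [j [Hjn Hnj]].
  destruct (integrand_block_lower r B N Hr HB HN n x p j Hp Hnj) as [J [HJ HJge]].
  apply Rle_trans with (B * (/4) ^ S j); [apply HaN; auto|].
  apply (le_d_r _ _ _ _ J); auto.
  - lra.
  - apply Rmult_le_pos; [lra | apply pow_le; lra].
  - apply integrand_int01_finite; auto.
Qed.
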